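(* Let $A, B$ be $2n\times 2n$ real symmetric positive semidefinite matrices whose kernels are symplectic subspaces of $\mathbb{R}^{2n}$. If $d(A) \prec^w_+ d(B)$, then there exist a probability vector $(p(\pi))_{\pi\in S_n}$, symplectic matrices $K_\pi\in\operatorname{Sp}(2n)$ ($\pi\in S_n$) and $M\in\operatorname{Sp}(2n)$, and $2n\times 2n$ diagonal matrices $D_\pi$ ($\pi\in S_n$) with strictly positive diagonal entries, such that $$A = \sum_{\pi\in S_n} p(\pi)\,(K_\pi D_\pi M)^T B\, (K_\pi D_\pi M).$$
   Context: Let $J = \begin{bmatrix} 0 & I_n \\ -I_n & 0\end{bmatrix}$. A real $2n\times 2n$ matrix $M$ is symplectic if $M^TJM = J$; $\operatorname{Sp}(2n)$ denotes the group of such matrices. A linear subspace $W\subseteq\mathbb{R}^{2n}$ is symplectic if for every $0\neq u\in W$ there is $v\in W$ with $u^TJv\neq 0$. For a real symmetric positive semidefinite $2n\times 2n$ matrix $A$ whose kernel is a symplectic subspace, there is $M\in\operatorname{Sp}(2n)$ with $M^TAM = D\oplus D$ where $D$ is an $n\times n$ diagonal matrix with non-negative entries, unique up to permutation of its diagonal entries; these are the symplectic eigenvalues of $A$, and $d(A) = (d_1(A),\dots,d_n(A))$ denotes them in non-decreasing order. $S_n$ is the symmetric group on $\{1,\dots,n\}$. An $n\times n$ real matrix is doubly stochastic if its entries are non-negative and every row and column sums to $1$; an $n\times n$ real matrix $S=[s_{ij}]$ is doubly superstochastic if there is a doubly stochastic $E=[e_{ij}]$ with $s_{ij}\ge e_{ij}$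 for all $i,j$. For $x,y\in\mathbb{R}^n$, $x\prec^w_+ y$ means $x = Sy$ for some doubly superstochastic $n\times n$ matrix $S$ all of whose entries are strictly positive. *)

From HB Require Import structures.
From mathcomp Require Import all_boot all_order all_algebra all_fingroup.
From mathcomp Require Import reals.
Set Implicit Arguments. Unset Strict Implicit. Unset Printing Implicit Defensive.
Import Order.TTheory GRing.Theory Num.Theory.
Local Open Scope ring_scope.

Section Defs.
Variable R : realType.
Variable n : nat.

Definition Jmx : 'M[R]_(n + n) := block_mx 0 1%:M (- 1%:M) 0.

Definition symplectic (M : 'M[R]_(n + n)) : Prop := M^T *m Jmx *m M = Jmx.

Definition sym_psd (A : 'M[R]_(n + n)) : Prop :=
  A^T = A /\ forall x : 'cV[R]_(n + n), 0 <= (x^T *m A *m x) 0 0.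

Definition ker_symplectic (A : 'M[R]_(n + n)) : Prop :=
  forall u : 'cV[R]_(n + n), A *m u = 0 -> u != 0 ->
    exists v : 'cV[R]_(n + n), A *m v = 0 /\ (u^T *m Jmx *m v) 0 0 != 0.

Definition symp_eigs (A : 'M[R]_(n + n)) (d : 'cV[R]_n) : Prop :=
  (forall i, 0 <= d i 0) /\
  (forall i j : 'I_n, (i <= j)%N -> d i 0 <= d j 0) /\
  exists M : 'M[R]_(n + n), symplectic M /\
    M^T *m A *m M = block_mx (diag_mx d^T) 0 0 (diag_mx d^T).

End Defs.

Definition doubly_stochastic (R : realType) (n : nat) (E : 'M[R]_n) : Prop :=
  (forall i j, 0 <= E i j) /\
  (forall i, \sum_j E i j = 1) /\ (forall j, \sum_i E i j = 1).

Definition doubly_superstochastic (R : realType) (n : nat) (S : 'M[R]_n) : Prop :=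
  exists E : 'M[R]_n, doubly_stochastic E /\ forall i j, E i j <= S i j.

Definition wsupmaj_pos (R : realType) (n : nat) (x y : 'cV[R]_n) : Prop :=
  exists S : 'M[R]_n, doubly_superstochastic S /\ (forall i j, 0 < S i j) /\
    x = S *m y.

From HB Require Import structures.
From mathcomp Require Import all_boot all_order all_algebra all_fingroup.
From mathcomp Require Import reals.
Import Order.TTheory GRing.Theory Num.Theory.
Local Open Scope ring_scope.

(** Only the positivity of the matrix [S] with [d(A) = S d(B)] is used.
    After symplectic diagonalisation it suffices to write [diag (S y)] as the
    uniform average over [pi] of [D_pi P_pi^T diag(y) P_pi D_pi], with [P_pi]
    the permutation matrix of [pi] and [D_pi] positive diagonal.  The [i]-th
    diagonal entry of that term is [w_pi(i)^2 y_(pi i)]; taking [w_pi(i)^2] to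
    be [n! S_(i, pi i)] divided by the number of permutations sending [i] to
    [pi i] makes the average [sum_j S_ij y_j].  Block-diagonal permutation
    matrices are symplectic, so the identity lifts to [2n x 2n]. *)

Section Symplectic.
Context {R : realType} {n : nat}.
Local Notation J := (Jmx R n).

Lemma Jmx_sqr : J *m J = - 1%:M.
Proof.
rewrite /Jmx mulmx_block !mul0mx !mulmx0 !mul1mx !mulmx1 !addr0 !add0r.
by rewrite [in RHS](scalar_mx_block n n) opp_block_mx oppr0.
Qed.

Lemma symplecticM (M N : 'M[R]_(n + n)) :
  symplectic M -> symplectic N -> symplectic (M *m N).
Proof.
rewrite /symplectic => sM sN.
by rewrite trmx_mul !mulmxA -(mulmxA N^T M^T) -(mulmxA N^T (M^T *m _)) sM sN.
Qed.

Lemma symplectic_inverse (M : 'M[R]_(n + n)) : symplectic M ->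
  exists L, [/\ symplectic L, M *m L = 1%:M & L *m M = 1%:M].
Proof.
move=> sM; set L := - (J *m M^T *m J).
have LM : L *m M = 1%:M.
  by rewrite /L mulNmx -!mulmxA (mulmxA M^T) sM Jmx_sqr opprK.
have ML := mulmx1C LM.
exists L; split => //.
have sML : symplectic (M *m L) by rewrite ML /symplectic trmx1 mul1mx mulmx1.
by rewrite /symplectic -{2}sML trmx_mul !mulmxA -(mulmxA L^T M^T)
  -(mulmxA L^T (M^T *m _)) sM.
Qed.

Lemma symplectic_block_diag (P : 'M[R]_n) : P^T *m P = 1%:M ->
  symplectic (block_mx P 0 0 P).
Proof.
move=> oP; rewrite /symplectic /Jmx tr_block_mx !trmx0 !mulmx_block.
by rewrite !mul0mx !mulmx0 !mulmx1 !addr0 !add0r !mulmxN !mul0mx mulNmx mulmx1 oP.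
Qed.

End Symplectic.

Section BlockDiagonal.
Context {R : realType} {n : nat}.

Lemma sum_block_diag (I : finType) (F : I -> 'M[R]_n) :
  \sum_i block_mx (F i) 0 0 (F i) = block_mx (\sum_i F i) 0 0 (\sum_i F i).
Proof.
apply: (big_rec3 (fun a b c => a = block_mx b 0 0 c)); first by rewrite block_mx0.
by move=> i M1 M2 M3 _ ->; rewrite add_block_mx addr0.
Qed.

Lemma scale_block_diag (a : R) (X : 'M[R]_n) :
  a *: block_mx X 0 0 X = block_mx (a *: X) 0 0 (a *: X).
Proof. by rewrite scale_block_mx scaler0. Qed.

Lemma block_diag_congr (P D : 'M[R]_n) (e : 'rV[R]_n) :
  let Q := block_mx P 0 0 P *m diag_mx (row_mx e e) in
  Q^T *m block_mx D 0 0 D *m Q =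
  block_mx (diag_mx e *m P^T *m D *m P *m diag_mx e) 0 0
           (diag_mx e *m P^T *m D *m P *m diag_mx e).
Proof.
rewrite /= trmx_mul tr_diag_mx diag_mx_row tr_block_mx !trmx0.
by do 4 rewrite ?mulmx_block ?mul0mx ?mulmx0 ?addr0 ?add0r; rewrite !mulmxA.
Qed.

End BlockDiagonal.

Section PermutationAverage.
Context {R : realType} {n : nat}.
Implicit Types (S : 'M[R]_n) (s : 'S_n) (i j : 'I_n).

Definition perm_count i j : nat := #|[pred s : 'S_n | s i == j]|.

Lemma perm_count_gt0 i j : (0 < perm_count i j)%N.
Proof. by apply/card_gt0P; exists (tperm i j); rewrite inE /= tpermL. Qed.

Lemma sum_perm_div_count (F : 'I_n -> R) i :
  \sum_(s : 'S_n) F (s i) / (perm_count i (s i))%:R = \sum_j F j.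
Proof.
rewrite (partition_big (fun s : 'S_n => s i) xpredT) //=; apply: eq_bigr => j _.
rewrite (eq_bigr (fun _ => F j / (perm_count i j)%:R)); last by move=> s /eqP ->.
rewrite (eq_bigl [in [pred s : 'S_n | s i == j]]) // sumr_const.
rewrite -[_ *+ #|_|]mulr_natr.
by rewrite divfK // pnatr_eq0 -lt0n perm_count_gt0.
Qed.

Lemma perm_conj_diag_mx (e : 'rV[R]_n) (y : 'cV[R]_n) s :
  diag_mx e *m (perm_mx s^-1)^T *m diag_mx y^T *m perm_mx s^-1 *m diag_mx e =
  diag_mx (\row_i (e 0 i ^+ 2 * y (s i) 0)).
Proof.
apply/matrixP => i j.
rewrite tr_perm_mx invgK -!mulmxA mul_diag_mx mxE -row_permE mxE mul_diag_mx.
rewrite mxE -row_permE !mxE permK.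
by case: eqP => [->|]; rewrite ?mulr1n ?mulr0n ?mulr0 // mulrA mulrAC expr2.
Qed.

Definition perm_weight S s : 'rV[R]_n :=
  \row_i Num.sqrt (#|'S_n|%:R * S i (s i) / (perm_count i (s i))%:R).

Lemma perm_weight_gt0 S s i :
  (forall i j, 0 < S i j) -> 0 < perm_weight S s 0 i.
Proof.
move=> Spos; rewrite mxE sqrtr_gt0.
by rewrite divr_gt0 ?mulr_gt0 ?ltr0n ?card_Sn ?fact_gt0 ?perm_count_gt0.
Qed.

Lemma diag_mx_mul_perm_average S (y : 'cV[R]_n) : (forall i j, 0 <= S i j) ->
  diag_mx (S *m y)^T = \sum_(s : 'S_n) #|'S_n|%:R^-1 *:
    (diag_mx (perm_weight S s) *m (perm_mx s^-1)^T *m diag_mx y^T *m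
     perm_mx s^-1 *m diag_mx (perm_weight S s)).
Proof.
move=> Snneg.
have N0 : #|'S_n|%:R != 0 :> R by rewrite card_Sn pnatr_eq0 -lt0n fact_gt0.
under eq_bigr do rewrite perm_conj_diag_mx -linearZ.
rewrite -linear_sum; congr diag_mx; apply/rowP => i.
rewrite summxE !mxE -(sum_perm_div_count (fun j => S i j * y j 0) i).
apply: eq_bigr => s _; rewrite !mxE sqr_sqrtr ?divr_ge0 ?mulr_ge0 //.
by rewrite -!mulrA mulKf // [_^-1 * _]mulrC.
Qed.

End PermutationAverage.

Theorem theorem3p2 (R : realType) (n : nat) (A B : 'M[R]_(n + n))
  (dA dB : 'cV[R]_n) :
  sym_psd A -> sym_psd B -> ker_symplectic A -> ker_symplectic B ->
  symp_eigs A dA -> symp_eigs B dB ->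
  wsupmaj_pos dA dB ->
  exists (p : 'S_n -> R) (K : 'S_n -> 'M[R]_(n + n)) (M : 'M[R]_(n + n))
         (delta : 'S_n -> 'rV[R]_(n + n)),
    (forall pi, 0 <= p pi) /\ \sum_(pi : 'S_n) p pi = 1 /\
    (forall pi, symplectic (K pi)) /\ symplectic M /\
    (forall pi j, 0 < delta pi 0 j) /\
    A = \sum_(pi : 'S_n) p pi *:
          ((K pi *m diag_mx (delta pi) *m M)^T *m B *m
           (K pi *m diag_mx (delta pi) *m M)).
Proof.
move=> _ _ _ _ [_ [_ [MA [sMA dgA]]]] [_ [_ [MB [sMB dgB]]]] [S [_ [Spos dAS]]].
have [L [sL MAL _]] := symplectic_inverse MA sMA.
have N0 : 0 < #|'S_n|%:R :> R by rewrite card_Sn ltr0n fact_gt0.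
pose P (s : 'S_n) := perm_mx s^-1 : 'M[R]_n.
exists (fun _ => #|'S_n|%:R^-1), (fun s => MB *m block_mx (P s) 0 0 (P s)), L,
  (fun s => row_mx (perm_weight S s) (perm_weight S s)).
split; first by move=> _; rewrite invr_ge0 ltW.
split; first by rewrite sumr_const -[_ *+ _]mulr_natr mulVf ?lt0r_neq0.
split.
  move=> s; apply/symplecticM/symplectic_block_diag => //.
  by rewrite /P tr_perm_mx -perm_mxM invgK mulgV perm_mx1.
split=> //; split.
  by move=> s j; rewrite mxE; case: splitP => k _; apply: perm_weight_gt0.
have -> : A = L^T *m (MA^T *m A *m MA) *m L.
  by rewrite -!mulmxA MAL mulmx1 mulmxA -trmx_mul MAL trmx1 mul1mx.
rewrite dgA dAS diag_mx_mul_perm_average => [|i j]; last exact: ltW.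
rewrite -sum_block_diag mulmx_sumr mulmx_suml; apply: eq_bigr => s _.
rewrite -scale_block_diag -scalemxAr -scalemxAl -block_diag_congr -dgB.
by rewrite !trmx_mul !mulmxA.
Qed.
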